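(* Each brick and each brace of a cycle-extendable graph is cycle-extendable.
   Context: Graphs are loopless; multiple edges allowed. A graph is matching covered if it is connected, has at least two vertices, and every edge lies in some perfect matching; it is cycle-extendable if moreover for every even cycle $C$ the graph $G-V(C)$ has a perfect matching. For $X\subseteq V(G)$, $\partial(X)$ is the set of edges with exactly one end in $X$; it is a tight cut if every perfect matching contains exactly one edge of it, and nontrivial if both $X$ and $V(G)\setminus X$ have at least two vertices. The $\partial(X)$-contractions are obtained by shrinking $X$, respectively $V(G)\setminus X$, to a single vertex (keeping parallel edges). The bricks and braces of a matching covered graph are the graphs obtained by repeatedly replacing a graph having a nontrivial tight cut by its two cut-contractions until no nontrivial tight cuts remain: the resulting nonbipartite graphs are its bricks and the bipartite ones its braces. *)

From mathcomp Require Import all_boot.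
Set Implicit Arguments. Unset Strict Implicit. Unset Printing Implicit Defensive.

(* A (multi)graph: a finite vertex type, a finite edge type, and the
   ordered pair of ends of each edge (orientation is irrelevant below). *)
Record mgraph := MGraph {
  gV : finType;
  gE : finType;
  gends : gE -> gV * gV
}.

Section Defs.
Variable G : mgraph.
Local Notation V := (gV G).
Local Notation E := (gE G).
Local Notation ends := (@gends G).

Definition loopless : bool := [forall e : E, (ends e).1 != (ends e).2].

Definition incident (e : E) (v : V) : bool :=
  ((ends e).1 == v) || ((ends e).2 == v).

Definition joins (e : E) (u v : V) : bool :=
  (ends e == (u, v)) || (ends e == (v, u)).

Definition adjacent (u v : V) : bool := [exists e : E, joins e u v].

Definition gconnected : Prop := forall u v : V, connect adjacent u v.

(* M is a perfect matching of G - S: every edge of M avoids S and every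
   vertex outside S is incident with exactly one edge of M. *)
Definition perfect_matching_avoiding (S : {set V}) (M : {set E}) : bool :=
  [forall e in M, ((ends e).1 \notin S) && ((ends e).2 \notin S)] &&
  [forall v in ~: S, #|[set e in M | incident e v]| == 1].

Definition perfect_matching (M : {set E}) : bool :=
  perfect_matching_avoiding set0 M.

Definition matching_covered : Prop :=
  [/\ loopless, gconnected, 2 <= #|V|
    & forall e : E, exists M : {set E}, perfect_matching M && (e \in M)].

(* (vs, es) is a cycle: distinct vertices v_0..v_{k-1} (k >= 2) and
   distinct edges e_0..e_{k-1}, with e_i joining v_i and v_{i+1 mod k}.
   (For k = 2 this is a pair of parallel edges.) *)
Definition is_cycle (vs : seq V) (es : seq E) : bool :=
  [&& 2 <= size vs, size es == size vs, uniq vs, uniq es &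
      all (fun p => joins p.1 p.2.1 p.2.2) (zip es (zip vs (rot 1 vs)))].

Definition cycle_extendable : Prop :=
  matching_covered /\
  forall (vs : seq V) (es : seq E), is_cycle vs es -> ~~ odd (size vs) ->
    exists M : {set E}, perfect_matching_avoiding [set v in vs] M.

Definition cut (X : {set V}) : {set E} :=
  [set e | ((ends e).1 \in X) != ((ends e).2 \in X)].

Definition tight_cut (X : {set V}) : Prop :=
  forall M : {set E}, perfect_matching M -> #|M :&: cut X| = 1.

Definition nontrivial_cut (X : {set V}) : bool :=
  (2 <= #|X|) && (2 <= #|~: X|).

Definition bipartite : Prop :=
  exists A : {set V}, forall e : E, ((ends e).1 \in A) != ((ends e).2 \in A).

(* The contraction G/(X -> x): X is shrunk to a single new vertex (None);
   edges with both ends in X would become loops and are deleted;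
   all other edges (incl. parallel ones) are kept. *)
Definition cV (X : {set V}) : finType := option {v : V | v \notin X}.
Definition cE (X : {set V}) : finType :=
  {e : E | ((ends e).1 \notin X) || ((ends e).2 \notin X)}.
Definition cmap (X : {set V}) (v : V) : cV X :=
  match boolP (v \in X) with
  | AltTrue _ => None
  | AltFalse h => Some (exist _ v h)
  end.
Definition cends (X : {set V}) (e : cE X) : cV X * cV X :=
  (cmap X (ends (val e)).1, cmap X (ends (val e)).2).

End Defs.

Definition contract (G : mgraph) (X : {set gV G}) : mgraph :=
  @MGraph (cV X) (cE X) (@cends G X).

Inductive tc_reach (G : mgraph) : mgraph -> Prop :=
| tc_refl : tc_reach G G
| tc_shrinkX (X : {set gV G}) (H : mgraph) :
    nontrivial_cut X -> tight_cut X -> tc_reach (contract X) H -> tc_reach G H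
| tc_shrinkXc (X : {set gV G}) (H : mgraph) :
    nontrivial_cut X -> tight_cut X -> tc_reach (contract (~: X)) H -> tc_reach G H.

Definition no_nontrivial_tight_cut (H : mgraph) : Prop :=
  forall X : {set gV H}, nontrivial_cut X -> ~ tight_cut X.

Definition brick_of (G H : mgraph) : Prop :=
  [/\ tc_reach G H, no_nontrivial_tight_cut H & ~ bipartite H].

Definition brace_of (G H : mgraph) : Prop :=
  [/\ tc_reach G H, no_nontrivial_tight_cut H & bipartite H].

(* Bricks and braces arise by repeatedly contracting one shore of a tight cut, so it suffices
   that contracting a shore X of a tight cut keeps a graph G cycle-extendable.  Every perfect
   matching of G meets the cut once, so dropping its edges inside X leaves a perfect matching
   of G/X; this gives matching-coveredness.  For an even cycle C of G/X we pick an even cycle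
   C' of G and a perfect matching M of G - V(C'); adding alternate edges of C' to M gives a
   perfect matching of G, which meets the cut exactly once.  If C avoids the contracted
   vertex, C' = C has no cut edge, so M meets the cut once and projects to a perfect matching
   of G/X - V(C).  Otherwise the two edges of C at the contracted vertex end at u1, u2 in X;
   following alternately two perfect matchings through these edges leads from u2 to u1 along
   an even path inside X, which closes C up into C'.  Taking the alternate edges of C' through
   a cut edge shows that M misses the cut, so M projects to a perfect matching of G/X - V(C). *)

From mathcomp Require Import all_boot.
From mathcomp Require Import zify.
Set Implicit Arguments. Unset Strict Implicit. Unset Printing Implicit Defensive.

Lemma take_zip (S T : Type) n (s : seq S) (t : seq T) :
  take n (zip s t) = zip (take n s) (take n t).
Proof. by elim: n s t => [|n IH] [|x s] [|y t] //=; rewrite IH. Qed.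

Lemma drop_zip (S T : Type) n (s : seq S) (t : seq T) :
  drop n (zip s t) = zip (drop n s) (drop n t).
Proof. by elim: n s t => [|n IH] [|x s] [|y t] //=; case: drop. Qed.

Lemma zip_rot (S T : Type) n (s : seq S) (t : seq T) :
  size s = size t -> zip (rot n s) (rot n t) = rot n (zip s t).
Proof. by move=> Est; rewrite /rot zip_cat ?size_drop ?Est // take_zip drop_zip. Qed.

Section Walks.
Variable G : mgraph.
Local Notation V := (gV G).
Local Notation E := (gE G).
Local Notation ends := (@gends G).
Implicit Types (e : E) (es : seq E) (u v w x : V) (s vs : seq V).

Lemma joinsC e u v : joins e u v = joins e v u.
Proof. by rewrite /joins orbC. Qed.

Lemma joins_ends e u v : joins e u v ->
  ((ends e).1 \in [:: u; v]) && ((ends e).2 \in [:: u; v]).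
Proof. by case/orP=> /eqP ->; rewrite !inE !eqxx ?orbT. Qed.

Lemma joins_incident e u v x : joins e u v -> incident e x = (x == u) || (x == v).
Proof. by rewrite /incident ![_ == x]eq_sym => /orP[] /eqP -> //=; rewrite orbC. Qed.

Fixpoint walk x es s : bool :=
  match es, s with
  | e :: es', y :: s' => joins e x y && walk y es' s'
  | [::], [::] => true
  | _, _ => false
  end.

Lemma walk_size x es s : walk x es s -> size es = size s.
Proof. by elim: es x s => [|e es IH] x [|y s] //= /andP[_ /IH] ->. Qed.

Lemma walk_cat x es1 es2 s1 s2 : size es1 = size s1 ->
  walk x (es1 ++ es2) (s1 ++ s2) = walk x es1 s1 && walk (last x s1) es2 s2.
Proof. by elim: es1 x s1 => [|e es IH] x [|y s] //= [] /IH ->; rewrite andbA. Qed.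

Lemma walk_rcons x es e s y : size es = size s ->
  walk x (rcons es e) (rcons s y) = walk x es s && joins e (last x s) y.
Proof. by move=> Es; rewrite -!cats1 walk_cat //= andbT. Qed.

Lemma walk_ends x es s e : walk x es s -> e \in es ->
  ((ends e).1 \in x :: s) && ((ends e).2 \in x :: s).
Proof.
elim: es x s => [|f es IH] x [|y s] //= /andP[Hf Hw]; rewrite inE => /predU1P[->|He].
  by case/andP: (joins_ends Hf); rewrite !inE => /orP[]/eqP-> /orP[]/eqP->;
     rewrite !eqxx ?orbT.
by case/andP: (IH _ _ Hw He) => H1 H2; rewrite inE H1 inE H2 !orbT.
Qed.

Lemma walk_uniq x es s : walk x es s -> uniq (x :: s) -> uniq es.
Proof.
elim: es x s => [|f es IH] x [|y s] //= /andP[Hf Hw] /andP[Hx Hs].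
rewrite (IH _ _ Hw Hs) andbT; apply/negP => /(walk_ends Hw) /andP[].
by case/orP: Hf => /eqP -> /= H1 H2; rewrite ?H1 ?H2 in Hx.
Qed.

Lemma walk_zip x es s : walk x es s =
  (size es == size s) && all (fun p => joins p.1 p.2.1 p.2.2) (zip es (zip (belast x s) s)).
Proof. by elim: es x s => [|e es IH] x [|y s] //=; rewrite IH eqSS andbCA. Qed.

Lemma is_cycleE x s es : is_cycle (x :: s) es =
  [&& 0 < size s, uniq (x :: s), uniq es & walk x es (rcons s x)].
Proof.
rewrite /is_cycle rot1_cons walk_zip belast_rcons size_rcons /=.
by case: (size es == _); rewrite ?andbF.
Qed.

Lemma is_cycle_rot n vs es : is_cycle vs es -> is_cycle (rot n vs) (rot n es).
Proof.
case/and5P=> H2 /eqP Es Uvs Ues Hall; apply/and5P; split; rewrite ?size_rot ?rot_uniq //.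
  by rewrite Es.
rewrite rot_rot zip_rot ?size_rot // zip_rot ?size_zip ?size_rot ?Es ?minnn //.
by rewrite (perm_all _ (_ : perm_eq _ (zip es (zip vs (rot 1 vs))))) // perm_rot.
Qed.

Lemma is_cycle_close x es s e :
  walk x es s -> uniq (x :: s) -> 0 < size s -> joins e (last x s) x -> e \notin es ->
  is_cycle (x :: s) (rcons es e).
Proof.
move=> Hw Hu Hs He Hnew; rewrite is_cycleE Hs Hu rcons_uniq Hnew (walk_uniq Hw Hu).
by rewrite walk_rcons ?(walk_size Hw) // Hw He.
Qed.

Lemma is_cycle_ends vs es e : is_cycle vs es -> e \in es ->
  ((ends e).1 \in vs) && ((ends e).2 \in vs).
Proof.
case: vs => [|x s]; first by case/and5P.
rewrite is_cycleE => /and4P[_ _ _ /walk_ends Hends] /Hends.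
by rewrite -rcons_cons !mem_rcons !inE !orbA !orbb.
Qed.

Lemma is_cycle_consE x y s es : is_cycle (x :: y :: s) es ->
  exists e1 es' e2, [/\ es = e1 :: rcons es' e2, joins e1 x y,
                       walk y es' s & joins e2 (last y s) x].
Proof.
rewrite is_cycleE => /and4P[_ _ _].
case: es => [|e1 es] //= /andP[He1 Hw]; have := walk_size Hw.
case/lastP: es Hw => [|es' e2] Hw; first by rewrite size_rcons.
rewrite !size_rcons => -[Es]; move: Hw; rewrite walk_rcons // => /andP[Hw He2].
by exists e1, es', e2.
Qed.

Lemma is_cycle_splice x s es y t ps f g :
  walk x es s -> walk y ps t -> joins f (last x s) y -> joins g (last y t) x ->
  uniq (x :: s ++ y :: t) -> g \notin es ++ f :: ps ->
  is_cycle (x :: s ++ y :: t) (rcons (es ++ f :: ps) g).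
Proof.
move=> Hw Hwt Hf Hg U Hnew; apply: is_cycle_close => //; last first.
- by rewrite last_cat.
- by rewrite size_cat addnS.
by rewrite walk_cat ?(walk_size Hw) //= Hw Hf.
Qed.

End Walks.

Section Matchings.
Variable G : mgraph.
Local Notation V := (gV G).
Local Notation E := (gE G).
Local Notation ends := (@gends G).
Local Notation pm_avoiding := (@perfect_matching_avoiding G).
Implicit Types (e : E) (es : seq E) (u v w x : V) (s vs : seq V) (S T : {set V}).

Lemma incident_avoiding S e v :
  ((ends e).1 \notin S) && ((ends e).2 \notin S) -> v \in S -> incident e v = false.
Proof.
case/andP=> h1 h2 vS; apply/norP; split.
  by apply: contraNneq h1 => ->.
by apply: contraNneq h2 => ->.
Qed.

Lemma incident_setUr (M N : {set E}) v : {in N, forall e, incident e v = false} ->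
  [set e in M :|: N | incident e v] = [set e in M | incident e v].
Proof.
move=> Nv; apply/setP=> e; rewrite !inE andb_orl.
by case: (boolP (e \in N)) => [/Nv->|]; rewrite ?andbF ?orbF.
Qed.

Lemma perfect_matching_avoidingU S T M N :
  pm_avoiding S M -> pm_avoiding T N -> S :|: T = setT ->
  pm_avoiding (S :&: T) (M :|: N).
Proof.
case/andP=> /forall_inP M_S /forall_inP M_deg /andP[/forall_inP N_T /forall_inP N_deg] ST.
apply/andP; split.
  apply/forall_inP => e; rewrite inE => /orP[/M_S|/N_T] /andP[h1 h2];
  by rewrite !inE !negb_and ?h1 ?h2 ?orbT.
apply/forall_inP => v; rewrite !inE negb_and => /orP[vS|vT].
  have vT : v \in T by have := in_setT v; rewrite -ST inE (negbTE vS).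
  rewrite incident_setUr ?M_deg ?inE // => e /N_T eT; exact: incident_avoiding eT vT.
have vS : v \in S by have := in_setT v; rewrite -ST inE (negbTE vT) orbF.
rewrite setUC incident_setUr ?N_deg ?inE // => e /M_S eS; exact: incident_avoiding eS vS.
Qed.

Lemma perfect_matching_avoiding_disjoint S T M N :
  pm_avoiding S M -> pm_avoiding T N -> S :|: T = setT -> [disjoint M & N].
Proof.
case/andP=> /forall_inP M_S _ /andP[/forall_inP N_T _] ST.
apply/pred0P => e /=; apply/negbTE/andP => -[/M_S/andP[h _] /N_T/andP[h' _]].
by have := in_setT (ends e).1; rewrite -ST inE (negbTE h) (negbTE h').
Qed.

Lemma perfect_matching_avoiding_edge e u w :
  joins e u w -> u != w -> pm_avoiding (~: [set u; w]) [set e].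
Proof.
move=> Huw Hne; apply/andP; split.
  apply/forall_inP => f; rewrite inE => /eqP->.
  by have := joins_ends Huw; rewrite !inE !negbK.
apply/forall_inP => v; rewrite !inE negbK => Hv.
rewrite (_ : [set f in [set e] | incident f v] = [set e]) ?cards1 //.
apply/setP => f; rewrite !inE; case: eqP => [->|]; rewrite ?andbF //.
by rewrite (joins_incident _ Huw) Hv.
Qed.

Lemma path_half_matching x e es s :
  walk x (e :: es) s -> uniq (x :: s) -> ~~ odd (size es) ->
  exists N : {set E}, [/\ e \in N, {subset N <= e :: es} & pm_avoiding (~: [set v in x :: s]) N].
Proof.
have [n] := ubnP (size es); elim: n x e es s => [|n IH] x e es s //.
case: es => [|f [|e' es]] /= ltes; case: s => [|y [|z s]]; rewrite //= ?andbF //.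
  move=> /andP[He _] /andP[]; rewrite inE => xy _ _.
  exists [set e]; split.
  - by rewrite inE.
  - by move=> f; rewrite !inE.
  - rewrite (_ : [set v in [:: x; y]] = [set x; y]); first exact: perfect_matching_avoiding_edge.
    by apply/setP => v; rewrite !inE.
case/and3P=> He _ Hw /and3P[Hx Hy Uzs]; rewrite negbK => odd_es.
have xy : x != y by move: Hx; rewrite inE negb_or => /andP[].
have Hx' : x \notin z :: s by move: Hx; rewrite inE negb_or => /andP[].
have [|N' [e'N' subN' pmN']] := IH z e' es s _ Hw Uzs odd_es; first by rewrite -ltnS ltnW.
exists ([set e] :|: N'); split.
- by rewrite !inE eqxx.
- by move=> g; rewrite !inE => /orP[/eqP->|/subN']; rewrite ?inE ?eqxx // => ->; rewrite !orbT.
rewrite (_ : ~: _ = ~: [set x; y] :&: ~: [set v in z :: s]).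
  apply: perfect_matching_avoidingU pmN' _; first exact: perfect_matching_avoiding_edge.
  rewrite -setCI (_ : _ :&: _ = set0) ?setC0 //; apply/setP => v.
  rewrite in_set0; apply/negbTE; rewrite in_setI in_set2 in_set.
  by apply/andP => -[/orP[]/eqP-> H]; [move: Hx' | move: Hy]; rewrite H.
by apply/setP => v; rewrite !inE !negb_or -!andbA.
Qed.

Lemma even_cycle_half_matching vs es e :
  is_cycle vs es -> ~~ odd (size vs) -> e \in es ->
  exists N : {set E}, [/\ e \in N, {subset N <= es} & pm_avoiding (~: [set v in vs]) N].
Proof.
move=> Hc even_vs He; set r := index e es.
have Hvs : rot r vs =i vs := mem_rot r vs.
have Hes : rot r es =i es := mem_rot r es.
have Hsz : size (rot r vs) = size vs := size_rot r vs.
have := is_cycle_rot r Hc; rewrite (rot_index He) in Hes *.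
case: (rot r vs) Hvs Hsz => [|x s] Hvs Hsz; first by case/and5P.
rewrite is_cycleE => /and4P[s_gt0 Us _].
case/lastP: (drop _ _ ++ _) Hes => [|es2 f] Hes Hw; have := walk_size Hw.
  by rewrite size_rcons => -[Es]; rewrite -Es in s_gt0.
rewrite -rcons_cons !size_rcons => -[Es].
move: Hw; rewrite -rcons_cons walk_rcons // => /andP[Hw _].
have [|N [eN subN pmN]] := path_half_matching Hw Us.
  by move: even_vs; rewrite -Hsz /= -Es /= negbK.
exists N; split => // [g /subN gN|].
  by rewrite -Hes -rcons_cons mem_rcons inE gN orbT.
rewrite (_ : [set v in vs] = [set v in x :: s]) //.
by apply/setP => v; rewrite !in_set Hvs.
Qed.

Lemma tight_cut_complementary X S M N :
  tight_cut X -> pm_avoiding S M -> pm_avoiding (~: S) N ->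
  #|M :&: cut X| + #|N :&: cut X| = 1.
Proof.
move=> tX pmM pmN; have ST := setUCr S.
rewrite -(tX (M :|: N)); last first.
  by rewrite /perfect_matching -(setICr S); exact: perfect_matching_avoidingU.
have MN : [disjoint M :&: cut X & N :&: cut X].
  exact: disjointW (subsetIl _ _) (subsetIl _ _) (perfect_matching_avoiding_disjoint pmM pmN ST).
by rewrite setIUl cardsU (disjoint_setI0 MN) cards0 subn0.
Qed.

Lemma tight_cut_cycle_crossing X vs es M e :
  tight_cut X -> is_cycle vs es -> ~~ odd (size vs) ->
  pm_avoiding [set v in vs] M -> e \in es -> e \in cut X -> #|M :&: cut X| = 0.
Proof.
move=> tX Hc even_vs pmM He eX.
have [N [eN _ pmN]] := even_cycle_half_matching Hc even_vs He.
have pos : 0 < #|N :&: cut X| by apply/card_gt0P; exists e; rewrite inE eN.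
have := tight_cut_complementary tX pmM pmN; lia.
Qed.

Lemma tight_cut_cycle_inside X vs es M :
  tight_cut X -> is_cycle vs es -> ~~ odd (size vs) ->
  pm_avoiding [set v in vs] M -> {in es, forall f, f \notin cut X} -> #|M :&: cut X| = 1.
Proof.
move=> tX Hc even_vs pmM inside.
have /hasP[e He _] : has predT es.
  by rewrite has_predT; case/and5P: Hc => /ltnW + /eqP ->.
have [N [_ subN pmN]] := even_cycle_half_matching Hc even_vs He.
have := tight_cut_complementary tX pmM pmN.
rewrite (_ : N :&: cut X = set0) ?cards0 ?addn0 //.
apply/setP => f; rewrite in_setI in_set0; case fN: (f \in N) => //=.
exact/negbTE/inside/subN.
Qed.

End Matchings.

Lemma uniq_mkseq_inj (T : eqType) (f : nat -> T) n k l :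
  uniq (mkseq f n.+1) -> k <= n -> l <= n -> f k = f l -> k = l.
Proof. by move=> /mkseq_uniqP inj kn ln; apply: inj; rewrite unfold_in /= ltnS. Qed.

Section AlternatingWalk.
Variables (T : finType) (sigma tau : T -> T) (X : {set T}) (a b : T).
Hypotheses (sigmaK : involutive sigma) (tauK : involutive tau).
Hypotheses (sigma_neq : forall x, sigma x != x) (tau_neq : forall x, tau x != x).
Hypotheses (aX : a \in X) (sigma_aX : sigma a \notin X).
Hypotheses (sigmaX : {in X, forall x, x != a -> sigma x \in X}).
Hypotheses (tauX : {in X, forall x, x != b -> tau x \in X}).

Definition alt_step k := if odd k then sigma else tau.

Fixpoint alt_walk k := if k is k'.+1 then alt_step k' (alt_walk k') else a.

Lemma alt_stepK k : involutive (alt_step k).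
Proof. by rewrite /alt_step; case: odd. Qed.

Lemma alt_step_neq k x : alt_step k x != x.
Proof. by rewrite /alt_step; case: odd. Qed.

(* Both steps are fixed-point-free involutions, so the walk can be retraced backwards and a
   first repetition could only revisit [a]; this is excluded because [sigma a \notin X] and
   [tau a] is the second vertex of the walk. *)
Lemma alt_walk_fresh j : uniq (mkseq alt_walk j.+1) -> alt_walk j \in X ->
  alt_walk j.+1 \notin mkseq alt_walk j.+1.
Proof.
move=> /uniq_mkseq_inj inj xjX.
apply/negP => /mapP[i]; rewrite mem_iota leq0n add0n ltnS /= => lei Ei.
have Ej : alt_walk j = alt_step j (alt_walk i) by rewrite -Ei /= alt_stepK.
case: (ltnP i j) => [ltij|leji]; last first.
  have Eij : i = j by apply/anti_leq; rewrite lei leji.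
  by move/eqP: Ei; rewrite Eij /= (negbTE (alt_step_neq _ _)).
case: i ltij lei Ei Ej => [|i] ltij lei _ Ej.
  move: Ej; rewrite /alt_step; case: (boolP (odd j)) => oj Ej.
    by move: sigma_aX; rewrite -Ej xjX.
  by move: oj; rewrite -(inj 1 j) ?Ej.
have [Eo|Eo] := eqVneq (odd j) (odd i).
  have step_ji : alt_step j = alt_step i by rewrite /alt_step Eo.
  have : alt_walk j = alt_walk i by rewrite Ej /= step_ji alt_stepK.
  by move/(inj j i (leqnn j) (ltnW lei)) => Eji; rewrite Eji ltnn in lei.
have step_ji : alt_step j = alt_step i.+1 by rewrite /alt_step /=; move: Eo; case: odd; case: odd.
have : alt_walk j = alt_walk i.+2 by rewrite Ej step_ji.
by move/(inj j i.+2 (leqnn j) ltij) => Eij2; move: Eo; rewrite Eij2 /= negbK eqxx.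
Qed.

Lemma alt_walk_in_shore j : uniq (mkseq alt_walk j.+1) -> alt_walk j \in X ->
  odd j || (alt_walk j != b) -> alt_walk j.+1 \in X.
Proof.
move=> /uniq_mkseq_inj inj xjX; rewrite /= /alt_step; case: (boolP (odd j)) => oj /= jb.
  apply: sigmaX => //; apply: contraTneq oj => xja.
  by rewrite (inj j 0).
exact: tauX.
Qed.

Lemma alt_walk_reaches : exists n, [/\ ~~ odd n, alt_walk n = b,
  uniq (mkseq alt_walk n.+1) & {subset mkseq alt_walk n.+1 <= X}].
Proof.
pose good k := uniq (mkseq alt_walk k.+1) && all (mem X) (mkseq alt_walk k.+1).
pose stop k := ~~ odd k && (alt_walk k == b).
have step k : good k -> stop k || good k.+1.
  case/andP=> Uk /allP Xk; case: (boolP (stop k)) => //= nstop.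
  have xkX : alt_walk k \in X by apply/Xk/map_f; rewrite mem_iota add0n leq0n ltnSn.
  have xk1X : alt_walk k.+1 \in X.
    by apply: alt_walk_in_shore => //; move: nstop; rewrite negb_and negbK.
  by rewrite /good mkseqS rcons_uniq all_rcons Uk alt_walk_fresh // [mem X _]xk1X; apply/allP.
have reach k : (exists n, stop n && good n) \/ good k.
  elim: k => [|k [|gk]]; [by right; rewrite /good /= aX | by left |].
  by case/orP: (step k gk) => [sk|]; [left; exists k; rewrite sk | right].
case: (reach #|T|) => [[n /andP[/andP[on /eqP bn] /andP[Un /allP Xn]]]|/andP[U _]].
  by exists n.
by have := max_card (mem (mkseq alt_walk #|T|.+1)); rewrite (card_uniqP U) size_mkseq ltnn.
Qed.

End AlternatingWalk.

Section Mates.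
Variable G : mgraph.
Local Notation V := (gV G).
Local Notation E := (gE G).
Local Notation ends := (@gends G).
Implicit Types (M : {set E}) (e c : E) (u v w : V) (X : {set V}).

Definition mate M v : V :=
  if [pick e in M | incident e v] is Some e then
    if (ends e).1 == v then (ends e).2 else (ends e).1
  else v.

Lemma joins_uniq e u v w : joins e u v -> joins e u w -> v = w.
Proof. by rewrite /joins => /orP[]/eqP-> /orP[]/eqP[]; congruence. Qed.

Lemma perfect_matching_incident_uniq M v e f : perfect_matching M ->
  e \in M -> f \in M -> incident e v -> incident f v -> e = f.
Proof.
case/andP=> _ /forall_inP/(_ v) /[!inE] /(_ isT) /cards1P[g Eg] eM fM ev fv.
have: e \in [set g] by rewrite -Eg inE eM.
have: f \in [set g] by rewrite -Eg inE fM.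
by rewrite !inE => /eqP-> /eqP->.
Qed.

Lemma mate_joins M e v : perfect_matching M -> e \in M -> incident e v -> joins e v (mate M v).
Proof.
move=> pmM eM ev; rewrite /mate; case: pickP => [f /andP[fM fv]|/(_ e)]; last by rewrite eM ev.
rewrite (perfect_matching_incident_uniq pmM fM eM fv ev) /joins.
by move: ev; rewrite /incident; case: eqP => [<-|_ /eqP<-]; rewrite -surjective_pairing eqxx ?orbT.
Qed.

Lemma perfect_matching_edge_at M v : perfect_matching M -> exists2 e, e \in M & incident e v.
Proof.
case/andP=> _ /forall_inP/(_ v) /[!inE] /(_ isT) /cards1P[g Eg].
have: g \in [set g] by rewrite inE.
by rewrite -Eg inE => /andP[]; exists g.
Qed.

Lemma mate_adjacent M v : perfect_matching M -> adjacent v (mate M v).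
Proof.
move=> pmM; have [e eM ev] := perfect_matching_edge_at v pmM.
by apply/existsP; exists e; exact: mate_joins.
Qed.

Lemma mate_edge M c u w : perfect_matching M -> c \in M -> joins c u w -> mate M u = w.
Proof.
move=> pmM cM cuw; have cu : incident c u by rewrite (joins_incident _ cuw) eqxx.
exact: joins_uniq (mate_joins pmM cM cu) cuw.
Qed.

Lemma mateK M : perfect_matching M -> involutive (mate M).
Proof.
move=> pmM v; have [e eM ev] := perfect_matching_edge_at v pmM.
by apply: (mate_edge pmM eM); rewrite joinsC; exact: mate_joins.
Qed.

Lemma mate_neq M v : loopless G -> perfect_matching M -> mate M v != v.
Proof.
move=> /forallP loopl pmM; have [e eM ev] := perfect_matching_edge_at v pmM.
by have := loopl e; case/orP: (mate_joins pmM eM ev) => /eqP->; rewrite // eq_sym.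
Qed.

Lemma joins_cut X e u w : joins e u w -> u \in X -> w \notin X -> e \in cut X.
Proof. by move=> euw uX wX; rewrite inE; case/orP: euw => /eqP->; rewrite /= uX (negbTE wX). Qed.

Lemma mate_in_shore X M u v : tight_cut X -> perfect_matching M ->
  u \in X -> mate M u \notin X -> v \in X -> v != u -> mate M v \in X.
Proof.
move=> tX pmM uX muX vX; apply: contraNT => mvX.
have [e eM ev] := perfect_matching_edge_at v pmM.
have [f fM fu] := perfect_matching_edge_at u pmM.
have eX := joins_cut (mate_joins pmM eM ev) vX mvX.
have fX := joins_cut (mate_joins pmM fM fu) uX muX.
have /cards1P[g Eg] : #|M :&: cut X| == 1 by rewrite tX.
have: e \in [set g] by rewrite -Eg inE eM.
have: f \in [set g] by rewrite -Eg inE fM.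
rewrite !inE => /eqP Efg /eqP Eeg; rewrite -Efg in Eeg; subst e.
move: ev; rewrite (joins_incident _ (mate_joins pmM fM fu)) => /orP[//|/eqP Ev].
by rewrite -Ev vX in muX.
Qed.

Lemma walk_of_adjacent (g : nat -> V) n :
  (forall i, i < n -> adjacent (g i) (g i.+1)) -> exists es, walk (g 0) es [seq g i | i <- iota 1 n].
Proof.
elim: n g => [|n IH] g adj; first by exists [::].
have [|es Hw] := IH (fun i => g i.+1) => [i lt_in|]; first exact: adj.
have /existsP[e He] := adj 0 isT.
exists (e :: es); rewrite /= He -[2]/(1 + 1) iotaDl -map_comp.
exact: Hw.
Qed.

Lemma even_path_in_shore X M1 M2 a1 a2 :
  loopless G -> tight_cut X -> perfect_matching M1 -> perfect_matching M2 ->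
  a1 \in X -> mate M1 a1 \notin X -> a2 \in X -> mate M2 a2 \notin X ->
  exists s es, [/\ walk a1 es s, last a1 s = a2, uniq (a1 :: s),
                    {subset a1 :: s <= X} & ~~ odd (size es)].
Proof.
move=> loopl tX pm1 pm2 a1X m1X a2X m2X.
have [n [even_n reach U sub]] := alt_walk_reaches (mateK pm1) (mateK pm2)
  (fun v => mate_neq v loopl pm1) (fun v => mate_neq v loopl pm2) a1X m1X
  (fun v vX => mate_in_shore tX pm1 a1X m1X vX) (fun v vX => mate_in_shore tX pm2 a2X m2X vX).
set g := alt_walk _ _ _ in reach U sub.
have [|es Hw] := walk_of_adjacent (g := g) (n := n).
  by move=> i _; rewrite /g /= /alt_step; case: odd; exact: mate_adjacent.
exists [seq g i | i <- iota 1 n], es; split => //.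
- by rewrite (last_nth a1) size_map size_iota -reach; exact: (nth_mkseq a1 g (ltnSn n)).
- by rewrite (walk_size Hw) size_map size_iota.
Qed.

End Mates.

Section Contraction.
Variables (G : mgraph) (X : {set gV G}).
Local Notation V := (gV G).
Local Notation E := (gE G).
Local Notation ends := (@gends G).
Local Notation GX := (contract X).
Local Notation out := {v : V | v \notin X}.
Implicit Types (M : {set E}) (v : V) (w : out).

Lemma cmap_in v : v \in X -> cmap X v = None.
Proof.
rewrite /cmap => vX; destruct (boolP (v \in X)) as [vX'|vX'] => //.
by exfalso; rewrite vX in vX'.
Qed.

Lemma cmap_out v (vX : v \notin X) : cmap X v = Some (exist _ v vX).
Proof.
rewrite /cmap; destruct (boolP (v \in X)) as [vX'|vX']; first by exfalso; rewrite vX' in vX.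
by congr (Some _); apply: val_inj.
Qed.

Lemma cmap_None v : (cmap X v == None) = (v \in X).
Proof.
case: (boolP (v \in X)) => vX; first by rewrite cmap_in.
by rewrite (cmap_out vX); apply/esym/negbTE.
Qed.

Lemma cmap_Some v w : (cmap X v == Some w) = (v == val w).
Proof.
case: (boolP (v \in X)) => [vX|vX]; last first.
  by rewrite cmap_out; apply/eqP/eqP => [[<-]|Ev] //; congr Some; exact: val_inj.
by rewrite cmap_in //; apply/esym/eqP => Ev; have := valP w; rewrite /= -Ev vX.
Qed.

Lemma joins_cmap (e : cE X) u v : joins (val e) u v -> @joins GX e (cmap X u) (cmap X v).
Proof. by rewrite /joins /= /cends; case/orP=> /eqP->; rewrite eqxx ?orbT. Qed.

Lemma joins_Some (e : cE X) w1 w2 :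
  @joins GX e (Some w1) (Some w2) = joins (val e) (val w1) (val w2).
Proof. by rewrite /joins /= !xpair_eqE !cmap_Some. Qed.

Lemma joins_None (e : cE X) w : @joins GX e None (Some w) ->
  exists2 u, u \in X & joins (val e) u (val w).
Proof.
rewrite {1}/joins /= !xpair_eqE !cmap_None !cmap_Some.
case/orP=> [/andP[uX /eqP Ew]|/andP[/eqP Ew uX]].
  by exists (ends (val e)).1; rewrite // /joins -Ew -surjective_pairing eqxx.
by exists (ends (val e)).2; rewrite // /joins -Ew -surjective_pairing eqxx orbT.
Qed.

Lemma walk_Some w es s :
  @walk GX (Some w) es (map Some s) = walk (val w) (map val es) (map val s).
Proof. by elim: es w s => [|e es IH] w [|w' s] //=; rewrite joins_Some IH. Qed.

Lemma is_cycle_Some s es :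
  @is_cycle GX (map Some s) es = is_cycle (map val s) (map val es).
Proof.
case: s => [|w s]; first by rewrite /is_cycle.
rewrite !map_cons !is_cycleE -!map_cons -!map_rcons walk_Some !size_map.
by rewrite !(map_inj_uniq val_inj) (map_inj_uniq Some_inj).
Qed.

Lemma seq_Some (s : seq (cV X)) : None \notin s -> s = map Some (pmap id s).
Proof. by elim: s => [|[w|] s IH] //=; rewrite inE negb_or => /andP[_ /IH <-]. Qed.

Definition contract_edges M : {set cE X} := [set e | val e \in M].

Lemma card_val_set (P : pred E) :
  (forall f, P f -> ((ends f).1 \notin X) || ((ends f).2 \notin X)) ->
  #|[set e : cE X | P (val e)]| = #|[set f | P f]|.
Proof.
move=> HP; rewrite -(card_imset _ val_inj); apply: eq_card => f.
rewrite inE; apply/imsetP/idP => [[e] /[!inE] Pe ->|Pf] //.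
by exists (exist _ f (HP f Pf)); rewrite ?inE.
Qed.

Lemma card_contract_incident_Some M w :
  #|[set e in contract_edges M | @incident GX e (Some w)]| = #|[set f in M | incident f (val w)]|.
Proof.
rewrite -card_val_set => [|f /andP[_]]; last first.
  by rewrite /incident => /orP[]/eqP->; rewrite (valP w) ?orbT.
by apply: eq_card => e; rewrite !inE /incident /= !cmap_Some.
Qed.

Lemma card_contract_incident_None M :
  #|[set e in contract_edges M | @incident GX e None]| = #|M :&: cut X|.
Proof.
rewrite (_ : M :&: cut X = [set f | (f \in M) && (f \in cut X)]); last by apply/setP => f; rewrite !inE.
rewrite -card_val_set => [|f /andP[_]]; last by rewrite inE; do 2!case: (_ \in X).
apply: eq_card => e; rewrite !inE /incident /= !cmap_None.
by have := valP e; rewrite /=; do 2!case: (_ \in X).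
Qed.

Lemma perfect_matching_contract S M (Sc : {set cV X}) :
  perfect_matching_avoiding S M -> #|M :&: cut X| = (None \notin Sc) ->
  (forall w, (Some w \in Sc) = (val w \in S)) ->
  @perfect_matching_avoiding GX Sc (contract_edges M).
Proof.
case/andP=> /forall_inP M_S /forall_inP M_deg cutM Sc_S.
have end_out f x : f \in M -> x \notin S -> (x \in X -> f \in cut X) -> cmap X x \notin Sc.
  move=> fM xS xcut; case: (boolP (x \in X)) => [xX|xX]; last by rewrite cmap_out Sc_S.
  rewrite cmap_in //; apply/negP => NSc.
  have: 0 < #|M :&: cut X| by apply/card_gt0P; exists f; rewrite inE fM xcut.
  by rewrite cutM NSc.
apply/andP; split.
  apply/forall_inP => e; rewrite inE => eM; have /andP[h1 h2] := M_S _ eM.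
  have e_out := valP e.
  rewrite !(end_out (val e)) // inE; move: e_out => /=;
  by case: ((ends (val e)).1 \in X); case: ((ends (val e)).2 \in X).
apply/forall_inP => -[w|]; rewrite inE => cSc.
  by rewrite card_contract_incident_Some M_deg // inE -Sc_S.
by rewrite card_contract_incident_None cutM cSc.
Qed.

End Contraction.

Definition every_edge_matchable (G : mgraph) : Prop :=
  forall e : gE G, exists M : {set gE G}, perfect_matching M && (e \in M).

Definition even_cycle_complements_matchable (G : mgraph) : Prop :=
  forall (vs : seq (gV G)) (es : seq (gE G)), is_cycle vs es -> ~~ odd (size vs) ->
    exists M : {set gE G}, perfect_matching_avoiding [set v in vs] M.

Section ContractionProperties.
Variables (G : mgraph) (X : {set gV G}).
Local Notation V := (gV G).
Local Notation E := (gE G).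
Local Notation ends := (@gends G).
Local Notation GX := (contract X).

Lemma loopless_contract : loopless G -> loopless GX.
Proof.
move=> /forallP loopl; apply/forallP => e /=; have := valP e; rewrite /= /cends /=.
case: (boolP ((ends (val e)).1 \in X)) => [x1X|x1X] /= x2X.
  by rewrite (cmap_in x1X) eq_sym cmap_None.
by rewrite (cmap_out x1X) eq_sym cmap_Some eq_sym; exact: loopl.
Qed.

Lemma adjacent_contract u v : adjacent u v -> connect (@adjacent GX) (cmap X u) (cmap X v).
Proof.
case/existsP => e euv; case: (boolP ((u \in X) && (v \in X))) => [/andP[uX vX]|uvX].
  by rewrite !cmap_in.
have e_out : ((ends e).1 \notin X) || ((ends e).2 \notin X).
  by case/orP: euv => /eqP->; rewrite /= -negb_and // andbC.
by apply/connect1/existsP; exists (exist _ e e_out); exact: joins_cmap.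
Qed.

Lemma gconnected_contract : 0 < #|X| -> gconnected G -> gconnected GX.
Proof.
case/card_gt0P => x0 x0X conn.
have surj c : exists v, cmap X v = c.
  by case: c => [[v vX]|]; [exists v; rewrite cmap_out | exists x0; rewrite cmap_in].
move=> c d; have [u <-] := surj c; have [v <-] := surj d.
have /connectP[p p_path ->] := conn u v.
elim: p u p_path => [|y p IH] u /=; first by rewrite connect0.
by case/andP=> uy /IH; apply: connect_trans; exact: adjacent_contract.
Qed.

Lemma card_contract_gt1 : 0 < #|~: X| -> 1 < #|gV GX|.
Proof.
case/card_gt0P => y0; rewrite inE => y0X.
by apply/card_gt1P; exists None, (Some (exist _ y0 y0X)).
Qed.

Lemma every_edge_matchable_contract :
  tight_cut X -> every_edge_matchable G -> every_edge_matchable GX.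
Proof.
move=> tX mcov e; have [M /andP[pmM eM]] := mcov (val e).
exists (contract_edges X M); rewrite inE eM andbT.
have cutM := tX M pmM.
by apply: perfect_matching_contract pmM _ _ => [|w]; rewrite !in_set0 ?cutM.
Qed.

Lemma contract_cycle_avoiding s es : tight_cut X -> even_cycle_complements_matchable G ->
  @is_cycle GX (map Some s) es -> ~~ odd (size s) ->
  exists M, @perfect_matching_avoiding GX [set c in map Some s] M.
Proof.
rewrite is_cycle_Some => tX ext Hc even_s; rewrite -(size_map val) in even_s.
have [M pmM] := ext _ _ Hc even_s.
have out x : x \in map val s -> x \notin X by case/mapP => w _ ->; exact: (valP w).
have inside : {in map val es, forall f, f \notin cut X}.
  move=> f /(is_cycle_ends Hc) /andP[/out h1 /out h2].
  by rewrite inE (negbTE h1) (negbTE h2).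
have cutM := tight_cut_cycle_inside tX Hc even_s pmM inside.
exists (contract_edges X M); apply: perfect_matching_contract pmM _ _ => [|w].
  have /negbTE NS : None \notin map Some s by apply/negP => /mapP[].
  by rewrite cutM inE NS.
by rewrite !inE (mem_map Some_inj) (mem_map val_inj).
Qed.

Lemma contract_cycle_through_lift s es : loopless G -> tight_cut X -> every_edge_matchable G ->
  @is_cycle GX (None :: map Some s) es -> odd (size s) ->
  exists vs' es' e, [/\ is_cycle vs' es', ~~ odd (size vs'), e \in es', e \in cut X
                     & forall w, (w \in s) = (val w \in vs')].
Proof.
move=> loopl tX mcov Hc; case: s Hc => [|w s] // Hc; rewrite /= => even_s.
have [U Ues] : uniq (None :: map Some (w :: s)) /\ uniq es by case/and5P: Hc.
have [f1 [es' [f2 [Ees Hf1 Hw Hf2]]]] := is_cycle_consE Hc.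
rewrite walk_Some in Hw; rewrite last_map joinsC in Hf2.
have [u1 u1X Hu1] := joins_None Hf1.
have [u2 u2X Hu2] := joins_None Hf2.
have [M1 /andP[pm1 f2M1]] := mcov (val f2).
have [M2 /andP[pm2 f1M2]] := mcov (val f1).
have m1X : mate M1 u2 \notin X by rewrite (mate_edge pm1 f2M1 Hu2); exact: (valP (last w s)).
have m2X : mate M2 u1 \notin X by rewrite (mate_edge pm2 f1M2 Hu1); exact: (valP w).
have [p [ps [Hp Hlast Up pX even_ps]]] := even_path_in_shore loopl tX pm1 pm2 u2X m1X u1X m2X.
have Uws : uniq (w :: s) by move: U; rewrite cons_uniq (map_inj_uniq Some_inj) => /andP[].
have out x : x \in map val (w :: s) -> x \notin X by case/mapP => v _ ->; exact: (valP v).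
have f1ps : val f1 \notin ps.
  apply/negP => /(walk_ends Hp) /andP[e1X e2X].
  have /pX : val w \in u2 :: p by case/orP: Hu1 e1X e2X => /eqP-> /= a b; rewrite ?a ?b.
  by rewrite (negbTE (valP w)).
(* The even path inside X closes the lift of the cycle, which then crosses the cut at [f1]. *)
exists (val w :: map val s ++ u2 :: p), (rcons (map val es' ++ val f2 :: ps) (val f1)), (val f1).
split; last 2 first.
- exact: joins_cut Hu1 u1X (valP w).
- move=> v; rewrite -(mem_map val_inj) -cat_cons -map_cons mem_cat.
  have [vp|] := boolP (val v \in u2 :: p); last by rewrite orbF.
  by have := pX _ vp; rewrite (negbTE (valP v)).
- apply: is_cycle_splice Hw Hp _ _ _ _.
  + by rewrite last_map joinsC.
  + by rewrite Hlast.
  + rewrite -cat_cons -map_cons cat_uniq Up andbT (map_inj_uniq val_inj) Uws andTb.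
    by apply/hasPn => x /pX; apply: contraL; exact: out.
  move: Ues; rewrite Ees /= mem_rcons !inE negb_or mem_cat inE => /andP[/andP[f12 f1es'] _].
  by rewrite (mem_map val_inj) (negbTE f1es') (inj_eq val_inj) (negbTE f12).
- rewrite /= size_cat /= size_map -(walk_size Hp) addnS /= negbK oddD.
  by rewrite (negbTE even_s) (negbTE even_ps).
by rewrite mem_rcons mem_head.
Qed.

Lemma contract_cycle_through s es : loopless G -> tight_cut X -> every_edge_matchable G ->
  even_cycle_complements_matchable G ->
  @is_cycle GX (None :: map Some s) es -> odd (size s) ->
  exists M, @perfect_matching_avoiding GX [set c in None :: map Some s] M.
Proof.
move=> loopl tX mcov ext Hc odd_s.
have [vs' [es' [e [Hc' even' ees' ecut Hvs]]]] := contract_cycle_through_lift loopl tX mcov Hc odd_s.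
have [M pmM] := ext _ _ Hc' even'.
have cutM := tight_cut_cycle_crossing tX Hc' even' pmM ees' ecut.
exists (contract_edges X M); apply: perfect_matching_contract pmM _ _ => [|v].
  by rewrite cutM inE mem_head.
by rewrite !inE (mem_map Some_inj) Hvs.
Qed.

End ContractionProperties.

Lemma cycle_extendable_contract (G : mgraph) (X : {set gV G}) :
  cycle_extendable G -> tight_cut X -> 0 < #|X| -> 0 < #|~: X| -> cycle_extendable (contract X).
Proof.
case=> -[loopl conn _ mcov] ext tX X0 CX0.
split; first split.
- exact: loopless_contract.
- exact: gconnected_contract.
- exact: card_contract_gt1.
- exact: every_edge_matchable_contract.
move=> vs es Hc even_vs; case: (boolP (None \in vs)) => [Nvs|Nvs]; last first.
  rewrite (seq_Some Nvs) in Hc even_vs *; rewrite size_map in even_vs.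
  exact: contract_cycle_avoiding Hc even_vs.
have := is_cycle_rot (index None vs) Hc; rewrite rot_index //.
set rest := drop _ _ ++ _ => Hc'.
have Nrest : None \notin rest by case/and5P: Hc' => _ _ /andP[].
rewrite (seq_Some Nrest) in Hc'.
have [|M pmM] := contract_cycle_through loopl tX mcov ext Hc'.
  move: even_vs; rewrite -(size_rot (index None vs)) rot_index // -/rest /= negbK.
  by rewrite {1}(seq_Some Nrest) size_map.
exists M; rewrite (_ : [set c in vs] = [set c in None :: map Some (pmap id rest)]) //.
by apply/setP => c; rewrite !in_set -(seq_Some Nrest) -(rot_index Nvs) mem_rot.
Qed.

Lemma cut_setC (G : mgraph) (X : {set gV G}) : cut (~: X) = cut X.
Proof. by apply/setP => e; rewrite !inE; do 2!case: (_ \in X). Qed.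

Lemma tight_cut_setC (G : mgraph) (X : {set gV G}) : tight_cut X -> tight_cut (~: X).
Proof. by rewrite /tight_cut cut_setC. Qed.

Theorem corollary2p5 (G : mgraph) :
  cycle_extendable G ->
  forall H : mgraph, (brick_of G H \/ brace_of G H) -> cycle_extendable H.
Proof.
move=> ceG H HGH; have reach : tc_reach G H by case: HGH => -[].
elim: reach ceG => {H HGH} G' // X H /andP[X2 CX2] tX _ IH ceG; apply: IH.
- exact: cycle_extendable_contract ceG tX (ltnW X2) (ltnW CX2).
- apply: cycle_extendable_contract ceG (tight_cut_setC tX) (ltnW CX2) _.
  by rewrite setCK ltnW.
Qed.
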